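(* There is a universal constant $C$ such that the following holds. Let $G=(V,E,m,w)$ be a weighted graph with an intrinsic metric $\rho$ such that all balls $B_R(x)$ are finite and the jump size $s=\sup_{x\sim y}\rho(x,y)$ is finite, and fix $x_0\in V$. For any ancient solution $u$ of $\partial_t u=\Delta u$ on $V\times(-\infty,0]$ and any $R\ge s$, $$R^2\int_{Q_R}\Gamma(u)+R^4\int_{Q_R}u_t^2\le C\int_{Q_{9R}}u^2.$$
   Context: A weighted graph $G=(V,E,m,w)$ consists of a locally finite, simple, undirected, connected graph $(V,E)$, a symmetric edge weight $w:E\to(0,\infty)$ (extended by $w_{xy}=0$ if $x\not\sim y$), and a vertex weight $m:V\to(0,\infty)$. The Laplacian is $\Delta f(x)=\sum_{y\sim x}\frac{w_{xy}}{m_x}(f(y)-f(x))$. A (pseudo)metric $\rho$ on $V$ is intrinsic if $\sum_{y\sim x}w_{xy}\rho^2(x,y)\le m_x$ for all $x$; $B_R(x)=\{y:\rho(y,x)\le R\}$ and $B_R:=B_R(x_0)$. An ancient solution is a function $u(x,t)$ on $V\times(-\infty,0]$, differentiable in $t$, with $u_t=\partial_t u=\Delta u$. $\Gamma(f)(x)=\frac12\sum_{y}\frac{w_{xy}}{m_x}(f(y)-f(x))^2$, applied to $u(\cdot,t)$ for each $t$. $Q_R=B_R\times[-R^2,0]$ and $\int_{Q_R}F:=\int_{-R^2}^0\sum_{x\in B_R}F(x,t)m_x\,dt$. *)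

From Stdlib Require Import Reals Lra List Relations ClassicalEpsilon.
From Coquelicot Require Import Coquelicot.
Open Scope R_scope.

Definition finite_set {V : Type} (P : V -> Prop) : Prop :=
  exists l : list V, NoDup l /\ forall y, In y l <-> P y.

(* A chosen enumeration (meaningful when finite_set P holds). *)
Definition finite_enum {V : Type} (P : V -> Prop) : list V :=
  epsilon (inhabits (@nil V)) (fun l => NoDup l /\ forall y, In y l <-> P y).

Definition fsum {V : Type} (P : V -> Prop) (F : V -> R) : R :=
  fold_right Rplus 0 (map F (finite_enum P)).

(* x ~ y iff w x y > 0 (w extended by 0 off edges). *)
Definition adj {V : Type} (w : V -> V -> R) (x y : V) : Prop := 0 < w x y.

Definition weighted_graph {V : Type} (w : V -> V -> R) (m : V -> R) : Prop :=
  (forall x y, w x y = w y x) /\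
  (forall x y, 0 <= w x y) /\
  (forall x, w x x = 0) /\
  (forall x, finite_set (adj w x)) /\
  (forall x, 0 < m x) /\
  (forall x y, clos_refl_trans V (adj w) x y).

Definition pseudometric {V : Type} (rho : V -> V -> R) : Prop :=
  (forall x, rho x x = 0) /\
  (forall x y, 0 <= rho x y) /\
  (forall x y, rho x y = rho y x) /\
  (forall x y z, rho x z <= rho x y + rho y z).

Definition intrinsic_metric {V : Type} (w : V -> V -> R) (m : V -> R)
    (rho : V -> V -> R) : Prop :=
  pseudometric rho /\
  forall x, fsum (adj w x) (fun y => w x y * rho x y ^ 2) <= m x.

Definition rball {V : Type} (rho : V -> V -> R) (x : V) (r : R) (y : V) : Prop :=
  rho y x <= r.

Definition jumps {V : Type} (w : V -> V -> R) (rho : V -> V -> R) (r : R) : Prop :=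
  exists x y, adj w x y /\ r = rho x y.

Definition Laplacian {V : Type} (w : V -> V -> R) (m : V -> R) (f : V -> R) (x : V) : R :=
  fsum (adj w x) (fun y => w x y / m x * (f y - f x)).

Definition Gamma {V : Type} (w : V -> V -> R) (m : V -> R) (f : V -> R) (x : V) : R :=
  / 2 * fsum (adj w x) (fun y => w x y / m x * (f y - f x) ^ 2).

(* Ancient solution on V x (-oo,0]: differentiable in t (left derivative at t = 0),
   with u_t = Laplacian u.  Values of u for t > 0 are irrelevant. *)
Definition ancient_solution {V : Type} (w : V -> V -> R) (m : V -> R)
    (u : V -> R -> R) : Prop :=
  (forall x t, t < 0 -> is_derive (u x) t (Laplacian w m (fun y => u y t) x)) /\
  (forall x, filterlim (fun h => (u x h - u x 0) / h) (at_left 0)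
                       (locally (Laplacian w m (fun y => u y 0) x))).

Definition u_t {V : Type} (u : V -> R -> R) (x : V) (t : R) : R := Derive (u x) t.

Definition intQ {V : Type} (rho : V -> V -> R) (m : V -> R) (x0 : V) (r : R)
    (F : V -> R -> R) : R :=
  RInt (fun t => fsum (rball rho x0 r) (fun x => F x t * m x)) (- r ^ 2) 0.

(* Two Caccioppoli inequalities, each from the discrete Green formula and Young's inequality, with
   a 1/a-Lipschitz cutoff [eta] in space (the intrinsic metric bounds its discrete gradient by 1/a^2)
   and a linear ramp in time.  Testing the equation against [eta^2 u] gives
   r^2 \int_{Q_{3r}} eta^2 Gamma(u) <= (10/9) \int_{Q_{9r}} u^2; differentiating the cut-off
   Dirichlet energy \sum w eta_x eta_y (u_y - u_x)^2 gives
   r^4 \int_{Q_r} (Delta u)^2 <= 9 r^2 \int_{Q_{3r}} eta^2 Gamma(u).  Since u_t = Delta u, the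
   theorem holds with C = 100/9.  Jumps have size at most r, so only vertices of B_{9r} enter, and
   all sums are finite sums over an enumeration of that ball.  To integrate by parts in time up to
   t = 0, u is continued linearly past 0. *)

From Stdlib Require Import Reals Lra List Permutation ClassicalEpsilon.
From Coquelicot Require Import Coquelicot.
Open Scope R_scope.

Definition lsum {A : Type} (f : A -> R) (l : list A) : R := fold_right Rplus 0 (map f l).

Definition lsum2 {A : Type} (F : A -> A -> R) (l : list A) : R :=
  lsum (fun x => lsum (fun y => F x y) l) l.

Section ListSums.
Context {A : Type}.
Implicit Types (f g : A -> R) (F G : A -> A -> R) (l : list A).

Lemma lsum_cons f a l : lsum f (a :: l) = f a + lsum f l.
Proof. reflexivity. Qed.

Lemma lsum_app f l1 l2 : lsum f (l1 ++ l2) = lsum f l1 + lsum f l2.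
Proof.
  induction l1 as [|a l1 IH]; cbn [app]; [cbn; lra|].
  rewrite !lsum_cons, IH; lra.
Qed.

Lemma lsum_perm f l1 l2 : Permutation l1 l2 -> lsum f l1 = lsum f l2.
Proof. induction 1; rewrite ?lsum_cons; lra. Qed.

Lemma lsum_ext_in f g l : (forall x, In x l -> f x = g x) -> lsum f l = lsum g l.
Proof. intros H; unfold lsum; f_equal; apply map_ext_in; exact H. Qed.

Lemma lsum_ext f g l : (forall x, f x = g x) -> lsum f l = lsum g l.
Proof. intros H; apply lsum_ext_in; auto. Qed.

Lemma lsum_le f g l : (forall x, In x l -> f x <= g x) -> lsum f l <= lsum g l.
Proof.
  induction l as [|a l IH]; intros H; [cbn; lra|]. rewrite !lsum_cons.
  apply Rplus_le_compat; [apply H; left; reflexivity | apply IH; intros; apply H; right; auto].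
Qed.

Lemma lsum_plus f g l : lsum (fun x => f x + g x) l = lsum f l + lsum g l.
Proof. induction l as [|a l IH]; [cbn; lra | rewrite !lsum_cons, IH; lra]. Qed.

Lemma lsum_scal c f l : lsum (fun x => c * f x) l = c * lsum f l.
Proof. induction l as [|a l IH]; [cbn; lra | rewrite !lsum_cons, IH; lra]. Qed.

Lemma lsum_eq0 f l : (forall x, In x l -> f x = 0) -> lsum f l = 0.
Proof.
  induction l as [|a l IH]; intros H; [reflexivity|]. rewrite lsum_cons, H, IH; [lra| |].
  - intros; apply H; right; auto.
  - left; reflexivity.
Qed.

Lemma lsum_ge0 f l : (forall x, In x l -> 0 <= f x) -> 0 <= lsum f l.
Proof. intros H. rewrite <- (lsum_eq0 (fun _ => 0) l) by auto. apply lsum_le; exact H. Qed.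

Lemma lsum2_swap F l : lsum2 F l = lsum2 (fun x y => F y x) l.
Proof.
  unfold lsum2. generalize l at 2 3. intros k.
  induction k as [|a k IH].
  - symmetry; apply lsum_eq0; reflexivity.
  - rewrite lsum_cons, IH, <- lsum_plus. apply lsum_ext; reflexivity.
Qed.

Lemma lsum2_ext F G l : (forall x y, F x y = G x y) -> lsum2 F l = lsum2 G l.
Proof. intros H; apply lsum_ext; intros; apply lsum_ext; auto. Qed.

Lemma lsum2_le F G l : (forall x y, In x l -> In y l -> F x y <= G x y) -> lsum2 F l <= lsum2 G l.
Proof. intros H; apply lsum_le; intros; apply lsum_le; auto. Qed.

Lemma lsum2_plus F G l : lsum2 (fun x y => F x y + G x y) l = lsum2 F l + lsum2 G l.
Proof. unfold lsum2; rewrite <- lsum_plus; apply lsum_ext; intros; apply lsum_plus. Qed.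

Lemma lsum2_scal c F l : lsum2 (fun x y => c * F x y) l = c * lsum2 F l.
Proof. unfold lsum2; rewrite <- lsum_scal; apply lsum_ext; intros; apply lsum_scal. Qed.

Lemma NoDup_incl_complement l k : NoDup l -> NoDup k -> incl l k ->
  exists k', Permutation k (l ++ k') /\ forall y, In y k' -> ~ In y l.
Proof.
  revert k; induction l as [|a l IH]; intros k Hl Hk Hlk.
  - exists k; split; [reflexivity | tauto].
  - inversion Hl as [|? ? Ha Hl']; subst.
    destruct (in_split a k (Hlk a (or_introl eq_refl))) as (k1 & k2 & ->).
    assert (Hk12 : NoDup (k1 ++ k2)) by exact (NoDup_remove_1 _ _ _ Hk).
    assert (Hak : ~ In a (k1 ++ k2)) by exact (NoDup_remove_2 _ _ _ Hk).
    destruct (IH (k1 ++ k2) Hl' Hk12) as (k' & Hperm & Hk').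
    + intros y Hy. assert (Hy' := Hlk y (or_intror Hy)).
      apply in_app_or in Hy' as [? | [-> | ?]]; apply in_or_app; tauto.
    + exists k'; split.
      * rewrite <- Permutation_middle. now apply perm_skip.
      * intros y Hy [<- | Hyl]; [|exact (Hk' y Hy Hyl)].
        apply Hak, (Permutation_in _ (Permutation_sym Hperm)), in_or_app; tauto.
Qed.

Lemma lsum_incl_le f l k : NoDup l -> NoDup k -> incl l k ->
  (forall y, In y k -> 0 <= f y) -> lsum f l <= lsum f k.
Proof.
  intros Hl Hk Hlk Hf. destruct (NoDup_incl_complement l k Hl Hk Hlk) as (k' & Hperm & _).
  rewrite (lsum_perm f _ _ Hperm), lsum_app.
  enough (0 <= lsum f k') by lra.
  apply lsum_ge0; intros y Hy; apply Hf, (Permutation_in _ (Permutation_sym Hperm)), in_or_app; tauto.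
Qed.

Lemma lsum_incl_eq f l k : NoDup l -> NoDup k -> incl l k ->
  (forall y, In y k -> ~ In y l -> f y = 0) -> lsum f l = lsum f k.
Proof.
  intros Hl Hk Hlk Hf. destruct (NoDup_incl_complement l k Hl Hk Hlk) as (k' & Hperm & Hk').
  rewrite (lsum_perm f _ _ Hperm), lsum_app, (lsum_eq0 f k'); [lra|].
  intros y Hy; apply Hf; [|exact (Hk' y Hy)].
  apply (Permutation_in _ (Permutation_sym Hperm)), in_or_app; tauto.
Qed.

End ListSums.

Lemma continuous_Rplus (f g : R -> R) t :
  continuous f t -> continuous g t -> continuous (fun s => f s + g s) t.
Proof. exact (continuous_plus f g t). Qed.

Lemma continuous_Rminus (f g : R -> R) t :
  continuous f t -> continuous g t -> continuous (fun s => f s - g s) t.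
Proof. exact (continuous_minus f g t). Qed.

Lemma continuous_Rmult (f g : R -> R) t :
  continuous f t -> continuous g t -> continuous (fun s => f s * g s) t.
Proof. exact (continuous_mult f g t). Qed.

Lemma continuous_Rdiv (f g : R -> R) t :
  continuous f t -> continuous (fun s => / g s) t -> continuous (fun s => f s / g s) t.
Proof. exact (continuous_mult f (fun s => / g s) t). Qed.

Lemma continuous_pow (f : R -> R) n t : continuous f t -> continuous (fun s => f s ^ n) t.
Proof.
  intros Hf; induction n as [|n IH]; cbn.
  - apply continuous_const.
  - now apply continuous_Rmult.
Qed.

Lemma continuous_lsum {A : Type} (f : A -> R -> R) l t :
  (forall x, continuous (f x) t) -> continuous (fun s => lsum (fun x => f x s) l) t.
Proof.
  intros Hf; induction l as [|a l IH].
  - apply continuous_const.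
  - now apply continuous_Rplus.
Qed.

Ltac solve_continuous :=
  repeat match goal with
  | |- continuous (fun _ => ?c) _ => apply continuous_const
  | |- continuous (fun t => t) _ => apply continuous_id
  | |- continuous (fun _ => lsum _ _) _ => apply continuous_lsum; intro
  | |- continuous (fun _ => _ + _) _ => apply continuous_Rplus
  | |- continuous (fun _ => _ - _) _ => apply continuous_Rminus
  | |- continuous (fun _ => _ * _) _ => apply continuous_Rmult
  | |- continuous (fun _ => _ / _) _ => apply continuous_Rdiv
  | |- continuous (fun _ => _ ^ _) _ => apply continuous_pow
  | |- continuous _ _ => solve [eauto]
  end.

Lemma is_derive_lsum {A : Type} (f : A -> R -> R) (df : A -> R) l t :
  (forall x, is_derive (f x) t (df x)) ->
  is_derive (fun s => lsum (fun x => f x s) l) t (lsum df l).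
Proof.
  intros Hf; induction l as [|a l IH].
  - apply (is_derive_const 0 t).
  - exact (is_derive_plus (f a) _ t _ _ (Hf a) IH).
Qed.

Lemma is_derive_Rminus (f g : R -> R) t df dg :
  is_derive f t df -> is_derive g t dg -> is_derive (fun s => f s - g s) t (df - dg).
Proof. exact (is_derive_minus f g t df dg). Qed.

(* A vanishing coefficient makes the term constant, so [g] need not be differentiable there. *)
Lemma is_derive_scal_sq (c : R) (g : R -> R) t dg :
  (c <> 0 -> is_derive g t dg) -> is_derive (fun s => c * g s ^ 2) t (c * (2 * g t * dg)).
Proof.
  intros Hg. destruct (Req_dec c 0) as [-> | Hc].
  - replace (0 * (2 * g t * dg)) with 0 by ring.
    apply (is_derive_ext (fun _ => 0));
      [intros s; exact (eq_sym (Rmult_0_l _)) | apply (is_derive_const 0 t)].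
  - replace (c * (2 * g t * dg)) with (c * (INR 2 * dg * g t ^ Nat.pred 2)) by (cbn; ring).
    apply is_derive_scal, is_derive_pow, Hg, Hc.
Qed.

Lemma ex_RInt_cont (f : R -> R) a b :
  a <= b -> (forall t, a <= t <= b -> continuous f t) -> ex_RInt f a b.
Proof.
  intros Hab Hf. apply (@ex_RInt_continuous R_CompleteNormedModule f).
  rewrite Rmin_left, Rmax_right by exact Hab. exact Hf.
Qed.

Lemma RInt_Rplus (f g : R -> R) a b :
  ex_RInt f a b -> ex_RInt g a b -> RInt (fun t => f t + g t) a b = RInt f a b + RInt g a b.
Proof. exact (RInt_plus f g a b). Qed.

Lemma RInt_Rmult (k : R) (f : R -> R) a b :
  ex_RInt f a b -> RInt (fun t => k * f t) a b = k * RInt f a b.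
Proof. exact (RInt_scal f a b k). Qed.

Lemma RInt_Chasles_R (f : R -> R) a b c :
  ex_RInt f a b -> ex_RInt f b c -> RInt f a b + RInt f b c = RInt f a c.
Proof. exact (RInt_Chasles f a b c). Qed.

Lemma RInt_le_widen (f g : R -> R) a b c :
  b <= a <= c -> (forall t, continuous f t) -> (forall t, continuous g t) ->
  (forall t, a <= t <= c -> f t <= g t) -> (forall t, b <= t <= a -> 0 <= g t) ->
  RInt f a c <= RInt g b c.
Proof.
  intros Hbac Hf Hg Hfg Hg0.
  assert (Hint : forall h x y, (forall t, continuous h t) -> x <= y -> ex_RInt h x y)
    by (intros h x y Hh Hxy; apply ex_RInt_cont; auto).
  rewrite <- (RInt_Chasles_R g b a c) by (apply Hint; auto; lra).
  assert (0 <= RInt g b a) by (apply RInt_ge_0; [lra | apply Hint; auto; lra | intros; apply Hg0; lra]).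
  assert (RInt f a c <= RInt g a c)
    by (apply RInt_le; [lra | apply Hint; auto; lra | apply Hint; auto; lra | intros; apply Hfg; lra]).
  lra.
Qed.

Lemma RInt_ramp_mul_derive (F dF : R -> R) T : 0 < T ->
  (forall t, -T <= t <= 0 -> is_derive F t (dF t)) -> (forall t, continuous dF t) ->
  RInt (fun t => (t + T) / T * dF t) (-T) 0 = F 0 - / T * RInt F (-T) 0.
Proof.
  intros HT HF HdF.
  assert (HFc : forall t, -T <= t <= 0 -> continuous F t)
    by (intros t Ht; apply (@ex_derive_continuous R_AbsRing R_NormedModule); eexists; exact (HF t Ht)).
  assert (Hramp : forall t, is_derive (fun s => (s + T) / T) t (/ T))
    by (intros t; auto_derive; [exact I | ring]).
  assert (Hibp := is_RInt_derive (fun t => (t + T) / T * F t)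
                    (fun t => / T * F t + (t + T) / T * dF t) (-T) 0).
  rewrite Rmin_left, Rmax_right in Hibp by lra.
  apply is_RInt_unique in Hibp.
  - rewrite RInt_Rplus, RInt_Rmult in Hibp.
    + unfold minus, plus, opp in Hibp; cbn -[RInt] in Hibp.
      replace ((0 + T) / T) with 1 in Hibp by (field; lra).
      replace ((- T + T) / T) with 0 in Hibp by (field; lra).
      lra.
    + apply ex_RInt_cont; [lra | exact HFc].
    + apply ex_RInt_cont; [lra|]. intros t Ht. solve_continuous.
    + apply ex_RInt_cont; [lra|]. intros t _. solve_continuous.
  - intros t Ht. exact (is_derive_mult _ F t _ _ (Hramp t) (HF t Ht) Rmult_comm).
  - intros t Ht. solve_continuous.
Qed.

(* Testing the differential inequality against the ramp (t + T) / T, which vanishes at -T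
   and is at least 1/2 on [-T/2, 0], trades the derivative of F for its time average. *)
Lemma RInt_time_cutoff (K F dF H : R -> R) c T :
  0 < T -> 0 <= c ->
  (forall t, continuous K t) -> (forall t, continuous dF t) -> (forall t, continuous H t) ->
  (forall t, -T <= t <= 0 -> is_derive F t (dF t)) ->
  (forall t, 0 <= K t) -> (forall t, 0 <= H t) -> 0 <= F 0 ->
  (forall t, -T <= t <= 0 -> K t <= - (c * dF t) + H t) ->
  RInt K (- (T / 2)) 0 <= 2 * (c / T * RInt F (-T) 0 + RInt H (-T) 0).
Proof.
  intros HT Hc HKc HdFc HHc HF HK0 HH0 HF0 HKdF.
  set (psi := fun t => (t + T) / T).
  assert (Hibp : RInt (fun t => psi t * dF t) (-T) 0 = F 0 - / T * RInt F (-T) 0)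
    by exact (RInt_ramp_mul_derive F dF T HT HF HdFc).
  assert (psi_cont : forall t, continuous psi t) by (intros; unfold psi; solve_continuous).
  assert (HTinv : 0 < / T /\ T * / T = 1) by (split; [apply Rinv_0_lt_compat | field]; lra).
  assert (Hpsi : forall t, -T <= t <= 0 -> 0 <= psi t <= 1) by (intros; unfold psi, Rdiv; nra).
  assert (Hpsi2 : forall t, - (T / 2) <= t -> / 2 <= psi t) by (intros; unfold psi, Rdiv; nra).
  assert (Hint : forall f, (forall t, continuous f t) -> ex_RInt f (-T) 0)
    by (intros f Hf; apply ex_RInt_cont; auto; lra).
  assert (Htested : RInt (fun t => psi t * K t) (-T) 0
                    <= - c * RInt (fun t => psi t * dF t) (-T) 0 + RInt (fun t => psi t * H t) (-T) 0).
  { rewrite <- RInt_Rmult, <- RInt_Rplus by (apply Hint; intros; solve_continuous).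
    apply RInt_le; [lra | apply Hint; intros; solve_continuous .. |].
    intros t Ht. specialize (Hpsi t ltac:(lra)). specialize (HKdF t ltac:(lra)).
    assert (psi t * K t <= psi t * (- (c * dF t) + H t)) by (apply Rmult_le_compat_l; lra).
    lra. }
  assert (HpsiH : RInt (fun t => psi t * H t) (-T) 0 <= RInt H (-T) 0).
  { apply RInt_le; [lra | apply Hint; intros; solve_continuous | apply Hint; exact HHc | ].
    intros t Ht. specialize (Hpsi t ltac:(lra)). specialize (HH0 t). nra. }
  assert (Hwiden : RInt K (- (T / 2)) 0 <= RInt (fun t => 2 * (psi t * K t)) (-T) 0).
  { apply RInt_le_widen; [lra | exact HKc | intros; solve_continuous | | ].
    - intros t Ht. specialize (Hpsi2 t ltac:(lra)). specialize (HK0 t). nra.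
    - intros t Ht. specialize (Hpsi t ltac:(lra)). specialize (HK0 t). nra. }
  rewrite RInt_Rmult in Hwiden by (apply Hint; intros; solve_continuous).
  assert (0 <= c * F 0) by (apply Rmult_le_pos; assumption).
  rewrite Hibp in Htested. unfold Rdiv. nra.
Qed.

Lemma RInt_time_cutoff_le (K F dF Phi : R -> R) c beta gamma T b :
  0 < T -> 0 <= c -> 0 <= beta -> 0 <= gamma -> b <= -T ->
  (forall t, continuous K t) -> (forall t, continuous F t) ->
  (forall t, continuous dF t) -> (forall t, continuous Phi t) ->
  (forall t, -T <= t <= 0 -> is_derive F t (dF t)) ->
  (forall t, 0 <= K t) -> (forall t, 0 <= Phi t) -> 0 <= F 0 -> (forall t, F t <= beta * Phi t) ->
  (forall t, -T <= t <= 0 -> K t <= - (c * dF t) + gamma * Phi t) ->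
  RInt K (- (T / 2)) 0 <= 2 * (c * beta / T + gamma) * RInt Phi b 0.
Proof.
  intros HT Hc Hbeta Hgamma Hb HKc HFc HdFc HPhic HF HK0 HPhi0 HF0 HFPhi HKdF.
  assert (Hint : forall f, (forall t, continuous f t) -> ex_RInt f (-T) 0)
    by (intros f Hf; apply ex_RInt_cont; auto; lra).
  assert (Hcut := RInt_time_cutoff K F dF (fun t => gamma * Phi t) c T HT Hc HKc HdFc
                    ltac:(intros; solve_continuous) HF HK0 ltac:(intros; apply Rmult_le_pos; auto)
                    HF0 HKdF).
  rewrite RInt_Rmult in Hcut by (apply Hint, HPhic).
  assert (HFint : RInt F (-T) 0 <= beta * RInt Phi (-T) 0).
  { rewrite <- RInt_Rmult by (apply Hint, HPhic).
    apply RInt_le; [lra | apply Hint, HFc | apply Hint; intros; solve_continuous | auto]. }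
  assert (HPhiint : RInt Phi (-T) 0 <= RInt Phi b 0)
    by (apply RInt_le_widen; [lra | exact HPhic | exact HPhic | intros; lra | auto]).
  assert (0 <= c / T) by (apply Rdiv_le_0_compat; lra).
  assert (c / T * RInt F (-T) 0 <= c / T * (beta * RInt Phi (-T) 0)) by (apply Rmult_le_compat_l; lra).
  assert (0 <= 2 * (c * beta / T + gamma)) by (unfold Rdiv; apply Rmult_le_pos; [lra|]; nra).
  assert (2 * (c * beta / T + gamma) * RInt Phi (-T) 0 <= 2 * (c * beta / T + gamma) * RInt Phi b 0)
    by (apply Rmult_le_compat_l; lra).
  unfold Rdiv in *. nra.
Qed.

(* Young's inequality applied to the discrete product rule for the gradient of [e^2 f]. *)
Lemma young_cutoff_grad ex ey fx fy :
  - ((ey ^ 2 * fy - ex ^ 2 * fx) * (fy - fx))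
  <= - / 4 * (ex ^ 2 * (fy - fx) ^ 2) + ((ey - ex) ^ 2 * fx ^ 2 + (ex - ey) ^ 2 * fy ^ 2).
Proof.
  pose proof (pow2_ge_0 ((ex + ey) * (fy - fx) / 2 + (ey - ex) * (fx + fy))).
  pose proof (pow2_ge_0 ((ex - ey) * (fy - fx))).
  pose proof (pow2_ge_0 (ex * (fy - fx))).
  pose proof (pow2_ge_0 (ey * (fy - fx))).
  nra.
Qed.

(* Same for [e^2 v]: the symmetric part [ex ey (vy - vx)] is kept, the rest is absorbed by
   Young's inequality with weight [lam]; [q] only has to be large where [e] jumps. *)
Lemma young_cutoff_lap ex ey vx vy D lam q :
  0 < lam -> 0 <= q -> (ex <> ey -> 1 <= q) ->
  - ((ey ^ 2 * vy - ex ^ 2 * vx) * D)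
  <= - (ex * ey * (D * (vy - vx)))
     + lam / 2 * ((ey - ex) ^ 2 * (ex ^ 2 * vx ^ 2) + (ex - ey) ^ 2 * (ey ^ 2 * vy ^ 2))
     + q * D ^ 2 / lam.
Proof.
  intros Hlam Hq Hjump.
  assert (Hsplit : - ((ey ^ 2 * vy - ex ^ 2 * vx) * D)
                   = - (ex * ey * (D * (vy - vx))) - (ey - ex) * (ey * vy + ex * vx) * D) by ring.
  assert (HqD : 0 <= q * D ^ 2 / lam)
    by (apply Rdiv_le_0_compat; [apply Rmult_le_pos; [exact Hq | apply pow2_ge_0] | exact Hlam]).
  destruct (Req_dec ex ey) as [<- | Hne].
  - rewrite Hsplit. replace (ex - ex) with 0 by ring. nra.
  - assert (Hyoung : - ((ey - ex) * (ey * vy + ex * vx) * D)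
                     <= lam / 4 * (ey - ex) ^ 2 * (ey * vy + ex * vx) ^ 2 + D ^ 2 / lam).
    { pose proof (pow2_ge_0 (lam * (ey - ex) * (ey * vy + ex * vx) / 2 + D)).
      apply Rmult_le_reg_l with lam; [exact Hlam|].
      replace (lam * (lam / 4 * (ey - ex) ^ 2 * (ey * vy + ex * vx) ^ 2 + D ^ 2 / lam))
        with ((lam * (ey - ex) * (ey * vy + ex * vx) / 2 + D) ^ 2
              - lam * ((ey - ex) * (ey * vy + ex * vx) * D)) by (field; lra).
      lra. }
    assert (Hsq : (ey * vy + ex * vx) ^ 2 <= 2 * (ex ^ 2 * vx ^ 2 + ey ^ 2 * vy ^ 2))
      by (pose proof (pow2_ge_0 (ey * vy - ex * vx)); nra).
    assert (HD : D ^ 2 / lam <= q * D ^ 2 / lam).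
    { unfold Rdiv. rewrite Rmult_assoc. rewrite <- (Rmult_1_l (D ^ 2 * / lam)) at 1.
      apply Rmult_le_compat_r; [| exact (Hjump Hne)].
      apply Rmult_le_pos; [apply pow2_ge_0 | left; apply Rinv_0_lt_compat, Hlam]. }
    assert (0 <= lam * (ey - ex) ^ 2) by (apply Rmult_le_pos; [lra | apply pow2_ge_0]).
    rewrite Hsplit. replace ((ex - ey) ^ 2) with ((ey - ex) ^ 2) by ring. nra.
Qed.

Section GraphOperators.
Context {V : Type} (w : V -> V -> R) (m : V -> R) (U : list V).

Definition lap (f : V -> R) (x : V) : R := lsum (fun y => w x y / m x * (f y - f x)) U.

Definition gam (f : V -> R) (x : V) : R := / 2 * lsum (fun y => w x y / m x * (f y - f x) ^ 2) U.

Hypothesis w_sym : forall x y, w x y = w y x.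
Hypothesis w_ge0 : forall x y, 0 <= w x y.
Hypothesis m_pos : forall x, 0 < m x.

Lemma lap_mul_m f x : lap f x * m x = lsum (fun y => w x y * (f y - f x)) U.
Proof.
  unfold lap. rewrite Rmult_comm, <- lsum_scal. apply lsum_ext; intros y.
  field. apply Rgt_not_eq, m_pos.
Qed.

Lemma gam_mul_m f x : 2 * gam f x * m x = lsum (fun y => w x y * (f y - f x) ^ 2) U.
Proof.
  unfold gam. replace (2 * (/ 2 * lsum (fun y => w x y / m x * (f y - f x) ^ 2) U) * m x)
    with (m x * lsum (fun y => w x y / m x * (f y - f x) ^ 2) U) by field.
  rewrite <- lsum_scal. apply lsum_ext; intros y.
  field. apply Rgt_not_eq, m_pos.
Qed.

Lemma gam_ge0 f x : 0 <= gam f x.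
Proof.
  assert (0 <= lsum (fun y => w x y * (f y - f x) ^ 2) U)
    by (apply lsum_ge0; intros y _; apply Rmult_le_pos; [apply w_ge0 | apply pow2_ge_0]).
  rewrite <- gam_mul_m in H. specialize (m_pos x). nra.
Qed.

Lemma lsum2_sq_diff_gam (a f : V -> R) :
  lsum2 (fun x y => w x y * (a x * (f y - f x) ^ 2)) U = 2 * lsum (fun x => a x * gam f x * m x) U.
Proof.
  unfold lsum2. rewrite <- lsum_scal. apply lsum_ext; intros x.
  transitivity (a x * (2 * gam f x * m x)); [|ring].
  rewrite gam_mul_m, <- lsum_scal. apply lsum_ext; intros y; ring.
Qed.

Lemma green_formula (f g : V -> R) :
  lsum (fun x => g x * lap f x * m x) U
  = - / 2 * lsum2 (fun x y => w x y * ((g y - g x) * (f y - f x))) U.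
Proof.
  assert (Hx : lsum (fun x => g x * lap f x * m x) U
               = lsum2 (fun x y => w x y * (g x * (f y - f x))) U).
  { apply lsum_ext; intros x. rewrite Rmult_assoc, lap_mul_m, <- lsum_scal.
    apply lsum_ext; intros y; ring. }
  assert (Hy : lsum (fun x => g x * lap f x * m x) U
               = lsum2 (fun x y => w x y * (- (g y * (f y - f x)))) U).
  { rewrite Hx, lsum2_swap. apply lsum2_ext; intros x y. rewrite (w_sym y x). ring. }
  rewrite <- lsum2_scal.
  replace (lsum2 (fun x y => - / 2 * (w x y * ((g y - g x) * (f y - f x)))) U)
    with (/ 2 * (lsum2 (fun x y => w x y * (g x * (f y - f x))) U
                 + lsum2 (fun x y => w x y * (- (g y * (f y - f x)))) U)).
  - lra.
  - rewrite <- lsum2_plus, <- lsum2_scal. apply lsum2_ext; intros x y; ring.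
Qed.

Lemma lsum2_cutoff_sq_le (e chi f : V -> R) : (forall x y, e x * e y <= chi x) ->
  lsum2 (fun x y => w x y * (e x * e y) * (f y - f x) ^ 2) U
  <= 2 * lsum (fun x => chi x * gam f x * m x) U.
Proof.
  intros Hchi. rewrite <- lsum2_sq_diff_gam. apply lsum2_le; intros x y _ _.
  rewrite Rmult_assoc. apply Rmult_le_compat_l; [apply w_ge0|].
  apply Rmult_le_compat_r; [apply pow2_ge_0 | apply Hchi].
Qed.

Section Caccioppoli.
Variables (e : V -> R) (lam : R).
Hypothesis lam_pos : 0 < lam.
Hypothesis e_energy : forall x, lam * lsum (fun y => w x y * (e y - e x) ^ 2) U <= m x.

Lemma lsum2_energy_le (a : V -> R) : (forall x, 0 <= a x) ->
  lsum2 (fun x y => w x y * ((e y - e x) ^ 2 * a x)) U <= / lam * lsum (fun x => a x * m x) U.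
Proof.
  intros Ha. unfold lsum2. rewrite <- lsum_scal. apply lsum_le; intros x _.
  replace (lsum (fun y => w x y * ((e y - e x) ^ 2 * a x)) U)
    with (a x * lsum (fun y => w x y * (e y - e x) ^ 2) U)
    by (rewrite <- lsum_scal; apply lsum_ext; intros y; ring).
  apply Rmult_le_reg_l with lam; [exact lam_pos|].
  replace (lam * (/ lam * (a x * m x))) with (a x * m x) by (field; lra).
  specialize (e_energy x). specialize (Ha x). nra.
Qed.

Lemma lsum_cutoff_mul_lap_le (f : V -> R) :
  lsum (fun x => e x ^ 2 * m x * (2 * f x * lap f x)) U
  <= - / 2 * lsum (fun x => e x ^ 2 * gam f x * m x) U + 2 / lam * lsum (fun x => f x ^ 2 * m x) U.
Proof.
  set (B := fun x y => w x y * ((e y - e x) ^ 2 * f x ^ 2)).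
  rewrite (lsum_ext _ (fun x => 2 * (e x ^ 2 * f x) * lap f x * m x)) by (intros; ring).
  rewrite green_formula.
  apply Rle_trans with
    (lsum2 (fun x y => - / 4 * (w x y * (e x ^ 2 * (f y - f x) ^ 2)) + (B x y + B y x)) U).
  - rewrite <- lsum2_scal. apply lsum2_le; intros x y _ _. unfold B. rewrite (w_sym y x).
    pose proof (young_cutoff_grad (e x) (e y) (f x) (f y)).
    pose proof (w_ge0 x y). nra.
  - rewrite lsum2_plus, lsum2_plus, lsum2_scal, lsum2_sq_diff_gam, <- (lsum2_swap B).
    assert (lsum2 B U <= / lam * lsum (fun x => f x ^ 2 * m x) U)
      by (apply lsum2_energy_le; intros; apply pow2_ge_0).
    unfold Rdiv. lra.
Qed.

Lemma lsum_cutoff_lap_sq_le (f chi : V -> R) :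
  (forall x, 0 <= chi x) -> (forall x y, e x <> e y -> 1 <= chi x + chi y) ->
  lsum (fun x => e x ^ 2 * lap f x ^ 2 * m x) U
  <= - lsum2 (fun x y => w x y * (e x * e y) * ((f y - f x) * (lap f y - lap f x))) U
     + 4 / lam * lsum (fun x => chi x * gam f x * m x) U.
Proof.
  intros chi_ge0 chi_jump.
  set (v := lap f).
  set (S := lsum (fun x => e x ^ 2 * v x ^ 2 * m x) U).
  set (B := fun x y => w x y * ((e y - e x) ^ 2 * (e x ^ 2 * v x ^ 2))).
  set (C := fun x y => w x y * (chi x * (f y - f x) ^ 2)).
  assert (HS : S = - / 2 * lsum2 (fun x y =>
                     w x y * ((e y ^ 2 * v y - e x ^ 2 * v x) * (f y - f x))) U).
  { unfold S. rewrite <- green_formula. apply lsum_ext; intros; unfold v; ring. }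
  assert (HB : lsum2 B U <= / lam * S)
    by (apply lsum2_energy_le; intros; apply Rmult_le_pos; apply pow2_ge_0).
  assert (HC : lsum2 C U = 2 * lsum (fun x => chi x * gam f x * m x) U)
    by apply lsum2_sq_diff_gam.
  assert (Hbound : S <= / 2 * lsum2 (fun x y =>
             -1 * (w x y * (e x * e y) * ((f y - f x) * (v y - v x)))
             + lam / 2 * (B x y + B y x) + / lam * (C x y + C y x)) U).
  { rewrite HS, <- lsum2_scal, <- lsum2_scal. apply lsum2_le; intros x y _ _.
    unfold B, C. rewrite (w_sym y x).
    pose proof (young_cutoff_lap (e x) (e y) (v x) (v y) (f y - f x) lam (chi x + chi y) lam_pos
                  ltac:(pose proof (chi_ge0 x); pose proof (chi_ge0 y); lra) (chi_jump x y)) as Hy.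
    apply Rmult_le_compat_l with (r := w x y) in Hy; [| apply w_ge0].
    apply Rmult_le_compat_l with (r := / 2) in Hy; [| lra].
    eapply Rle_trans; [| eapply Rle_trans; [exact Hy | right]].
    - right; ring.
    - field. lra. }
  rewrite !lsum2_plus, !lsum2_scal, !lsum2_plus, <- (lsum2_swap B), <- (lsum2_swap C), HC in Hbound.
  assert (lam * lsum2 B U <= S).
  { replace S with (lam * (/ lam * S)) by (field; lra). apply Rmult_le_compat_l; lra. }
  unfold Rdiv. lra.
Qed.

End Caccioppoli.
End GraphOperators.

Definition eta {V : Type} (rho : V -> V -> R) (x0 : V) (a : R) (x : V) : R :=
  Rmin 1 (Rmax 0 (2 - rho x x0 / a)).

Lemma clamp01_sq_le p q : (Rmin 1 (Rmax 0 p) - Rmin 1 (Rmax 0 q)) ^ 2 <= (p - q) ^ 2.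
Proof.
  rewrite <- (pow2_abs (p - q)). apply pow_maj_Rabs.
  unfold Rmin, Rmax, Rabs.
  repeat match goal with
         | |- context [Rle_dec ?x ?y] => destruct (Rle_dec x y)
         | _ : context [Rle_dec ?x ?y] |- _ => destruct (Rle_dec x y)
         | |- context [Rcase_abs ?x] => destruct (Rcase_abs x)
         end; lra.
Qed.

Section Cutoff.
Context {V : Type} (rho : V -> V -> R) (x0 : V) (a : R).
Hypothesis a_pos : 0 < a.

Lemma eta_range x : 0 <= eta rho x0 a x <= 1.
Proof. unfold eta, Rmin, Rmax; repeat destruct Rle_dec; lra. Qed.

Lemma eta_eq1 x : rho x x0 <= a -> eta rho x0 a x = 1.
Proof.
  intros Hx. apply (Rdiv_le_1 _ _ a_pos) in Hx.
  unfold eta, Rmin, Rmax; repeat destruct Rle_dec; lra.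
Qed.

Lemma eta_eq0 x : 2 * a <= rho x x0 -> eta rho x0 a x = 0.
Proof.
  intros Hx. apply (Rle_div_r _ _ _ a_pos) in Hx.
  unfold eta, Rmin, Rmax; repeat destruct Rle_dec; lra.
Qed.

Lemma eta_support x : eta rho x0 a x <> 0 -> rho x x0 < 2 * a.
Proof. intros Hx. apply Rnot_le_lt. intros Hfar. exact (Hx (eta_eq0 x Hfar)). Qed.

Lemma eta_lipschitz x y : pseudometric rho ->
  (eta rho x0 a y - eta rho x0 a x) ^ 2 <= (rho x y / a) ^ 2.
Proof.
  intros (_ & _ & rho_sym & rho_tri).
  eapply Rle_trans; [apply clamp01_sq_le|].
  pose proof (rho_tri y x x0). pose proof (rho_tri x y x0). rewrite (rho_sym y x) in *.
  replace (2 - rho y x0 / a - (2 - rho x x0 / a)) with ((rho x x0 - rho y x0) * / a) by (field; lra).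
  unfold Rdiv. rewrite !Rpow_mult_distr.
  apply Rmult_le_compat_r; [apply pow2_ge_0 | nra].
Qed.

End Cutoff.

Section NestedCutoffs.
Context {V : Type} (rho : V -> V -> R) (x0 : V) (a b : R).
Hypothesis a_pos : 0 < a.
Hypothesis two_a_le_b : 2 * a <= b.

Lemma eta_support_eq1 x : eta rho x0 a x <> 0 -> eta rho x0 b x = 1.
Proof. intros Hx. apply eta_support in Hx; [apply eta_eq1; lra | exact a_pos]. Qed.

Lemma eta_jump_le_sq x y :
  eta rho x0 a x <> eta rho x0 a y -> 1 <= eta rho x0 b x ^ 2 + eta rho x0 b y ^ 2.
Proof.
  intros Hxy. pose proof (pow2_ge_0 (eta rho x0 b x)). pose proof (pow2_ge_0 (eta rho x0 b y)).
  destruct (Req_dec (eta rho x0 a x) 0) as [Ex | Ex].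
  - rewrite (eta_support_eq1 y) by congruence. lra.
  - rewrite (eta_support_eq1 x Ex). lra.
Qed.

Lemma eta_mul_le_sq x y : eta rho x0 a x * eta rho x0 a y <= eta rho x0 b x ^ 2.
Proof.
  destruct (Req_dec (eta rho x0 a x) 0) as [Ex | Ex].
  - rewrite Ex, Rmult_0_l. apply pow2_ge_0.
  - rewrite (eta_support_eq1 x Ex).
    pose proof (eta_range rho x0 a x). pose proof (eta_range rho x0 a y). nra.
Qed.

End NestedCutoffs.

Section LocalSolution.
Context {V : Type} (w : V -> V -> R) (m : V -> R) (rho : V -> V -> R) (x0 : V) (r : R)
  (U : list V) (u : V -> R -> R).
Hypothesis w_sym : forall x y, w x y = w y x.
Hypothesis w_ge0 : forall x y, 0 <= w x y.
Hypothesis m_pos : forall x, 0 < m x.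
Hypothesis rho_pm : pseudometric rho.
Hypothesis r_pos : 0 < r.
Hypothesis jump_le : forall x y, 0 < w x y -> rho x y <= r.
Hypothesis intrinsic_U : forall x, rho x x0 <= 8 * r -> lsum (fun y => w x y * rho x y ^ 2) U <= m x.
Hypothesis u_cont : forall x t, continuous (u x) t.
Hypothesis u_heat : forall x t, t <= 0 -> rho x x0 <= 8 * r ->
  is_derive (u x) t (lap w m U (fun y => u y t) x).

(* Away from [B_{8r}] all neighbours lie outside [B_{2a}], where the cutoff vanishes. *)
Lemma eta_energy a : 0 < a -> 2 * a <= 7 * r ->
  forall x, a ^ 2 * lsum (fun y => w x y * (eta rho x0 a y - eta rho x0 a x) ^ 2) U <= m x.
Proof.
  intros Ha Ha7 x. destruct (Rle_dec (rho x x0) (8 * r)) as [Hx | Hx].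
  - eapply Rle_trans; [| exact (intrinsic_U x Hx)].
    rewrite <- lsum_scal. apply lsum_le; intros y _.
    pose proof (eta_lipschitz rho x0 a Ha x y rho_pm).
    replace (w x y * rho x y ^ 2) with (w x y * (a ^ 2 * (rho x y / a) ^ 2)) by (field; lra).
    rewrite <- Rmult_assoc, (Rmult_comm (a ^ 2)), Rmult_assoc.
    apply Rmult_le_compat_l; [apply w_ge0|].
    apply Rmult_le_compat_l; [apply pow2_ge_0 | assumption].
  - rewrite lsum_eq0; [rewrite Rmult_0_r; apply Rlt_le, m_pos|].
    intros y _. destruct (Rle_lt_or_eq_dec 0 (w x y) (w_ge0 x y)) as [Hw | <-]; [| ring].
    destruct rho_pm as (_ & _ & rho_sym & rho_tri).
    pose proof (rho_tri x y x0). pose proof (jump_le x y Hw).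
    rewrite !(eta_eq0 rho x0 a Ha) by lra. ring.
Qed.

Lemma is_derive_cutoff_mass (e : V -> R) t :
  (forall x, e x <> 0 -> rho x x0 <= 8 * r) -> t <= 0 ->
  is_derive (fun s => lsum (fun x => e x ^ 2 * m x * u x s ^ 2) U) t
    (lsum (fun x => e x ^ 2 * m x * (2 * u x t * lap w m U (fun y => u y t) x)) U).
Proof.
  intros He Ht. apply is_derive_lsum; intros x. apply is_derive_scal_sq. intros Hx.
  apply u_heat, He; [exact Ht|]. intros E; apply Hx; rewrite E; ring.
Qed.

Lemma is_derive_cutoff_dirichlet (e : V -> R) t :
  (forall x, e x <> 0 -> rho x x0 <= 8 * r) -> t <= 0 ->
  is_derive (fun s => lsum2 (fun x y => w x y * (e x * e y) * (u y s - u x s) ^ 2) U) t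
    (2 * lsum2 (fun x y => w x y * (e x * e y) *
       ((u y t - u x t) * (lap w m U (fun z => u z t) y - lap w m U (fun z => u z t) x))) U).
Proof.
  intros He Ht.
  replace (2 * lsum2 _ U) with (lsum2 (fun x y => w x y * (e x * e y) *
    (2 * (u y t - u x t) * (lap w m U (fun z => u z t) y - lap w m U (fun z => u z t) x))) U)
    by (rewrite <- lsum2_scal; apply lsum2_ext; intros; ring).
  apply is_derive_lsum; intros x; apply is_derive_lsum; intros y.
  apply (is_derive_scal_sq _ (fun s => u y s - u x s)); intros Hxy.
  apply is_derive_Rminus; apply u_heat, He; try exact Ht; intros E; apply Hxy; rewrite E; ring.
Qed.

Ltac solve_nonneg :=
  repeat match goal with
  | |- 0 <= lsum2 _ _ => unfold lsum2
  | |- 0 <= lsum _ _ => apply lsum_ge0; intros ? _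
  | |- 0 <= _ ^ 2 => apply pow2_ge_0
  | |- 0 <= _ * _ => apply Rmult_le_pos
  | |- 0 <= _ => solve [eauto using Rlt_le, gam_ge0]
  end.

Lemma RInt_cutoff_gam_le :
  RInt (fun t => lsum (fun x => eta rho x0 (3 * r) x ^ 2 * gam w m U (fun y => u y t) x * m x) U)
    (- (3 * r) ^ 2) 0
  <= 10 / (9 * r ^ 2) * RInt (fun t => lsum (fun x => u x t ^ 2 * m x) U) (- (9 * r) ^ 2) 0.
Proof.
  set (e := eta rho x0 (3 * r)).
  set (G := fun t => lsum (fun x => e x ^ 2 * gam w m U (fun y => u y t) x * m x) U).
  set (M := fun t => lsum (fun x => u x t ^ 2 * m x) U).
  set (I := fun t => lsum (fun x => e x ^ 2 * m x * u x t ^ 2) U).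
  set (dI := fun t => lsum (fun x => e x ^ 2 * m x * (2 * u x t * lap w m U (fun y => u y t) x)) U).
  assert (Hlam : 0 < (3 * r) ^ 2) by (apply pow_lt; lra).
  assert (G_cont : forall t, continuous G t) by (intros; unfold G, gam; solve_continuous).
  assert (M_cont : forall t, continuous M t) by (intros; unfold M; solve_continuous).
  assert (I_cont : forall t, continuous I t) by (intros; unfold I; solve_continuous).
  assert (dI_cont : forall t, continuous dI t) by (intros; unfold dI, lap; solve_continuous).
  assert (HI : forall t, - (18 * r ^ 2) <= t <= 0 -> is_derive I t (dI t))
    by (intros t Ht; apply is_derive_cutoff_mass; [intros x Hx; apply eta_support in Hx | ]; lra).
  assert (HIM : forall t, I t <= 1 * M t).
  { intros t. rewrite Rmult_1_l. apply lsum_le; intros x _.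
    pose proof (eta_range rho x0 (3 * r) x) as He. fold e in He.
    assert (0 <= u x t ^ 2 * m x) by solve_nonneg.
    replace (e x ^ 2 * m x * u x t ^ 2) with (e x ^ 2 * (u x t ^ 2 * m x)) by ring.
    rewrite <- (Rmult_1_l (u x t ^ 2 * m x)) at 2. apply Rmult_le_compat_r; nra. }
  assert (G_ge0 : forall t, 0 <= G t) by (intros; unfold G; solve_nonneg).
  assert (M_ge0 : forall t, 0 <= M t) by (intros; unfold M; solve_nonneg).
  assert (I0_ge0 : 0 <= I 0) by (unfold I; solve_nonneg).
  assert (Hkey : forall t, - (18 * r ^ 2) <= t <= 0 -> G t <= - (2 * dI t) + 4 / (3 * r) ^ 2 * M t).
  { intros t _. pose proof (lsum_cutoff_mul_lap_le w m U w_sym w_ge0 m_pos e _ Hlam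
                              (eta_energy (3 * r) ltac:(lra) ltac:(lra)) (fun y => u y t)).
    unfold G, dI, M, Rdiv in *. lra. }
  replace (- (3 * r) ^ 2) with (- (18 * r ^ 2 / 2)) by field.
  replace (10 / (9 * r ^ 2)) with (2 * (2 * 1 / (18 * r ^ 2) + 4 / (3 * r) ^ 2)) by (field; lra).
  apply (RInt_time_cutoff_le G I dI M);
    [nra | lra | lra | apply Rdiv_le_0_compat; lra | nra | assumption ..].
Qed.

Lemma RInt_cutoff_lap_sq_le :
  RInt (fun t => lsum (fun x => eta rho x0 r x ^ 2 * lap w m U (fun y => u y t) x ^ 2 * m x) U)
    (- r ^ 2) 0
  <= 9 / r ^ 2 * RInt (fun t => lsum (fun x =>
                   eta rho x0 (3 * r) x ^ 2 * gam w m U (fun y => u y t) x * m x) U) (- (3 * r) ^ 2) 0.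
Proof.
  set (e := eta rho x0 r).
  set (chi := fun x => eta rho x0 (3 * r) x ^ 2).
  set (K := fun t => lsum (fun x => e x ^ 2 * lap w m U (fun y => u y t) x ^ 2 * m x) U).
  set (G := fun t => lsum (fun x => chi x * gam w m U (fun y => u y t) x * m x) U).
  set (F := fun t => lsum2 (fun x y => w x y * (e x * e y) * (u y t - u x t) ^ 2) U).
  set (dF := fun t => 2 * lsum2 (fun x y => w x y * (e x * e y) *
               ((u y t - u x t) * (lap w m U (fun z => u z t) y - lap w m U (fun z => u z t) x))) U).
  assert (Hlam : 0 < r ^ 2) by (apply pow_lt; lra).
  assert (chi_ge0 : forall x, 0 <= chi x) by (intros; apply pow2_ge_0).
  assert (chi_jump : forall x y, e x <> e y -> 1 <= chi x + chi y)
    by (intros; apply (eta_jump_le_sq rho x0 r); auto; lra).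
  assert (K_cont : forall t, continuous K t) by (intros; unfold K, lap; solve_continuous).
  assert (G_cont : forall t, continuous G t) by (intros; unfold G, gam; solve_continuous).
  assert (F_cont : forall t, continuous F t) by (intros; unfold F, lsum2; solve_continuous).
  assert (dF_cont : forall t, continuous dF t) by (intros; unfold dF, lsum2, lap; solve_continuous).
  assert (HF : forall t, - (2 * r ^ 2) <= t <= 0 -> is_derive F t (dF t))
    by (intros t Ht; apply is_derive_cutoff_dirichlet; [intros x Hx; apply eta_support in Hx | ]; lra).
  assert (HFG : forall t, F t <= 2 * G t)
    by (intros; apply (lsum2_cutoff_sq_le w m U w_ge0 m_pos); intros; apply eta_mul_le_sq; lra).
  assert (K_ge0 : forall t, 0 <= K t) by (intros; unfold K; solve_nonneg).
  assert (G_ge0 : forall t, 0 <= G t) by (intros; unfold G; solve_nonneg).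
  assert (e_ge0 : forall x, 0 <= e x) by (intros; apply eta_range).
  assert (F0_ge0 : 0 <= F 0) by (unfold F; solve_nonneg).
  assert (Hkey : forall t, - (2 * r ^ 2) <= t <= 0 -> K t <= - (/ 2 * dF t) + 4 / r ^ 2 * G t).
  { intros t _. pose proof (lsum_cutoff_lap_sq_le w m U w_sym w_ge0 m_pos e _ Hlam
                  (eta_energy r r_pos ltac:(lra)) (fun y => u y t) chi chi_ge0 chi_jump) as H.
    cbv beta in H. unfold K, G, dF. lra. }
  replace (- r ^ 2) with (- (2 * r ^ 2 / 2)) by field.
  replace (9 / r ^ 2) with (2 * (/ 2 * 2 / (2 * r ^ 2) + 4 / r ^ 2)) by (field; lra).
  apply (RInt_time_cutoff_le K F dF G);
    [nra | lra | lra | apply Rdiv_le_0_compat; lra | nra | assumption ..].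
Qed.

End LocalSolution.

Lemma finite_enum_spec {A : Type} (P : A -> Prop) : finite_set P ->
  NoDup (finite_enum P) /\ forall y, In y (finite_enum P) <-> P y.
Proof. intros HP. exact (epsilon_spec (inhabits nil) _ HP). Qed.

Section BallEnumeration.
Context {V : Type} (w : V -> V -> R) (m : V -> R) (rho : V -> V -> R) (x0 : V) (r : R).
Hypothesis w_ge0 : forall x y, 0 <= w x y.
Hypothesis m_pos : forall x, 0 < m x.
Hypothesis rho_pm : pseudometric rho.
Hypothesis jump_le : forall x y, adj w x y -> rho x y <= r.
Hypothesis adj_finite : forall x, finite_set (adj w x).
Hypothesis ball_finite : forall x a, finite_set (rball rho x a).

Let U := finite_enum (rball rho x0 (9 * r)).

Lemma NoDup_U : NoDup U.
Proof. exact (proj1 (finite_enum_spec _ (ball_finite x0 (9 * r)))). Qed.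

Lemma In_U y : In y U <-> rho y x0 <= 9 * r.
Proof. exact (proj2 (finite_enum_spec _ (ball_finite x0 (9 * r))) y). Qed.

Lemma fsum_adj_lsum (F : V -> R) x : rho x x0 <= 8 * r -> (forall y, w x y = 0 -> F y = 0) ->
  fsum (adj w x) F = lsum F U.
Proof.
  intros Hx HF. destruct (finite_enum_spec _ (adj_finite x)) as [Hnd Hadj].
  apply lsum_incl_eq; [exact Hnd | exact NoDup_U | |].
  - intros y Hy. apply In_U. apply Hadj, jump_le in Hy.
    destruct rho_pm as (_ & _ & rho_sym & rho_tri).
    pose proof (rho_tri y x x0). rewrite rho_sym in Hy. lra.
  - intros y _ Hy. apply HF. rewrite Hadj in Hy. unfold adj in Hy.
    pose proof (w_ge0 x y). lra.
Qed.

Lemma Laplacian_lap f x : rho x x0 <= 8 * r -> Laplacian w m f x = lap w m U f x.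
Proof. intros Hx. apply fsum_adj_lsum; [exact Hx|]. intros y ->. unfold Rdiv; ring. Qed.

Lemma Gamma_gam f x : rho x x0 <= 8 * r -> Gamma w m f x = gam w m U f x.
Proof.
  intros Hx. unfold Gamma, gam. f_equal.
  apply fsum_adj_lsum; [exact Hx|]. intros y ->. unfold Rdiv; ring.
Qed.

Lemma intrinsic_lsum : intrinsic_metric w m rho ->
  forall x, rho x x0 <= 8 * r -> lsum (fun y => w x y * rho x y ^ 2) U <= m x.
Proof.
  intros [_ Hintr] x Hx. rewrite <- (fsum_adj_lsum _ x Hx); [apply Hintr |]. intros y ->; ring.
Qed.

Lemma intQ_le_RInt_lsum (F G : V -> R -> R) b : 0 <= r -> b <= - r ^ 2 ->
  (forall x t, - r ^ 2 < t < 0 -> rho x x0 <= r -> F x t = G x t) ->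
  (forall x t, 0 <= G x t) -> (forall x t, continuous (G x) t) ->
  intQ rho m x0 r F <= RInt (fun t => lsum (fun x => G x t * m x) U) b 0.
Proof.
  intros Hr Hb HFG HG0 HGc. unfold intQ.
  destruct (finite_enum_spec _ (ball_finite x0 r)) as [Hnd Hball].
  rewrite (RInt_ext _ (fun t => lsum (fun x => G x t * m x) (finite_enum (rball rho x0 r)))).
  2: { intros t Ht. rewrite Rmin_left, Rmax_right in Ht by nra.
       apply lsum_ext_in; intros x Hx. rewrite HFG; [reflexivity | lra | apply Hball, Hx]. }
  assert (HGm : forall x t, 0 <= G x t * m x)
    by (intros; apply Rmult_le_pos; [auto | apply Rlt_le, m_pos]).
  apply RInt_le_widen; [nra | intros; solve_continuous | intros; solve_continuous | |].
  - intros t _. apply lsum_incl_le; auto using NoDup_U.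
    intros y Hy. apply In_U. apply Hball in Hy. unfold rball in Hy. lra.
  - intros t _. apply lsum_ge0; auto.
Qed.

End BallEnumeration.

Definition extend_linear (f : R -> R) (L : R) (t : R) : R :=
  if Rle_dec t 0 then f t else f 0 + t * L.

Lemma extend_linear_le f L t : t <= 0 -> extend_linear f L t = f t.
Proof. intros Ht. unfold extend_linear. destruct (Rle_dec t 0); [reflexivity | lra]. Qed.

Lemma is_derive_extend_linear (f df : R -> R) :
  (forall t, t < 0 -> is_derive f t (df t)) ->
  filterlim (fun h => (f h - f 0) / h) (at_left 0) (locally (df 0)) ->
  forall t, is_derive (extend_linear f (df 0)) t (df (Rmin t 0)).
Proof.
  intros Hneg Hleft t. destruct (Rtotal_order t 0) as [Ht | [-> | Ht]].
  - rewrite Rmin_left by lra. apply (is_derive_ext_loc f); [| exact (Hneg t Ht)].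
    assert (Hd : 0 < - t) by lra. exists (mkposreal _ Hd). intros s Hs.
    apply Rabs_def2 in Hs. cbn in Hs. unfold extend_linear. destruct (Rle_dec s 0); [reflexivity | lra].
  - rewrite Rmin_left by lra. apply is_derive_Reals. intros eps Heps.
    apply filterlim_locally with (eps := mkposreal _ Heps) in Hleft. destruct Hleft as [d Hd].
    exists d. intros h Hh0 Hh. unfold extend_linear. rewrite Rplus_0_l.
    destruct (Rle_dec 0 0) as [_ | C]; [| lra]. destruct (Rle_dec h 0) as [Hn | Hn].
    + apply (Hd h); [| lra]. cbn. unfold AbsRing_ball, abs, minus, plus, opp; cbn.
      rewrite Ropp_0, Rplus_0_r. exact Hh.
    + replace ((f 0 + h * df 0 - f 0) / h - df 0) with 0 by (field; exact Hh0).
      rewrite Rabs_R0. exact Heps.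
  - rewrite Rmin_right by lra.
    apply (is_derive_ext_loc (fun s => f 0 + s * df 0)).
    + exists (mkposreal _ Ht). intros s Hs.
      apply Rabs_def2 in Hs. cbn in Hs.
      unfold extend_linear. destruct (Rle_dec s 0); [lra | reflexivity].
    + auto_derive; [exact I | ring].
Qed.

Section AncientSolution.
Context {V : Type} (w : V -> V -> R) (m : V -> R) (rho : V -> V -> R) (x0 : V) (r : R)
  (u : V -> R -> R).
Hypothesis w_sym : forall x y, w x y = w y x.
Hypothesis w_ge0 : forall x y, 0 <= w x y.
Hypothesis m_pos : forall x, 0 < m x.
Hypothesis rho_intrinsic : intrinsic_metric w m rho.
Hypothesis r_pos : 0 < r.
Hypothesis jump_le : forall x y, adj w x y -> rho x y <= r.
Hypothesis adj_finite : forall x, finite_set (adj w x).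
Hypothesis ball_finite : forall x a, finite_set (rball rho x a).
Hypothesis u_ancient : ancient_solution w m u.

Let rho_pm : pseudometric rho := proj1 rho_intrinsic.

Let U := finite_enum (rball rho x0 (9 * r)).
Let ut x := extend_linear (u x) (Laplacian w m (fun y => u y 0) x).

Lemma ut_slice t : t <= 0 -> (fun y => ut y t) = (fun y => u y t).
Proof.
  intros Ht. apply FunctionalExtensionality.functional_extensionality; intros y.
  apply extend_linear_le, Ht.
Qed.

Lemma is_derive_ut x t : is_derive (ut x) t (Laplacian w m (fun y => u y (Rmin t 0)) x).
Proof.
  destruct u_ancient as [Hneg Hleft].
  exact (is_derive_extend_linear (u x) (fun s => Laplacian w m (fun y => u y s) x)
           (fun s Hs => Hneg x s Hs) (Hleft x) t).
Qed.

Lemma ut_continuous x t : continuous (ut x) t.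
Proof. apply (@ex_derive_continuous R_AbsRing R_NormedModule). eexists; apply is_derive_ut. Qed.

Lemma ut_heat x t : t <= 0 -> rho x x0 <= 8 * r ->
  is_derive (ut x) t (lap w m U (fun y => ut y t) x).
Proof.
  intros Ht Hx. rewrite ut_slice by exact Ht. unfold U. rewrite <- Laplacian_lap by assumption.
  pose proof (is_derive_ut x t) as H. rewrite Rmin_left in H by exact Ht. exact H.
Qed.

Lemma intQ_Gamma_le :
  intQ rho m x0 r (fun x t => Gamma w m (fun y => u y t) x)
  <= RInt (fun t => lsum (fun x => eta rho x0 (3 * r) x ^ 2 * gam w m U (fun y => ut y t) x * m x) U)
       (- (3 * r) ^ 2) 0.
Proof.
  pose proof ut_continuous.
  unfold U. apply intQ_le_RInt_lsum with (rho := rho) (x0 := x0) (r := r); auto;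
    [lra | nra | | | intros; unfold gam; solve_continuous].
  - intros x t Ht Hx. rewrite eta_eq1, ut_slice, (Gamma_gam w m rho x0 r) by (auto; lra). ring.
  - intros x t. apply Rmult_le_pos; [apply pow2_ge_0 | apply gam_ge0; auto].
Qed.

Lemma intQ_u_t_le :
  intQ rho m x0 r (fun x t => u_t u x t ^ 2)
  <= RInt (fun t => lsum (fun x => eta rho x0 r x ^ 2 * lap w m U (fun y => ut y t) x ^ 2 * m x) U)
       (- r ^ 2) 0.
Proof.
  pose proof ut_continuous.
  unfold U. apply intQ_le_RInt_lsum with (rho := rho) (x0 := x0) (r := r); auto;
    [lra | lra | | | intros; unfold lap; solve_continuous].
  - intros x t Ht Hx. unfold u_t.
    rewrite (is_derive_unique _ _ _ (proj1 u_ancient x t ltac:(lra))).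
    rewrite eta_eq1, ut_slice, (Laplacian_lap w m rho x0 r) by (auto; lra). ring.
  - intros x t. apply Rmult_le_pos; apply pow2_ge_0.
Qed.

Lemma intQ_sq_eq :
  intQ rho m x0 (9 * r) (fun x t => u x t ^ 2)
  = RInt (fun t => lsum (fun x => ut x t ^ 2 * m x) U) (- (9 * r) ^ 2) 0.
Proof.
  apply RInt_ext. intros t Ht. rewrite Rmin_left, Rmax_right in Ht by nra.
  apply lsum_ext; intros x. unfold ut. rewrite extend_linear_le by lra. reflexivity.
Qed.

Lemma ancient_energy_estimate :
  r ^ 2 * intQ rho m x0 r (fun x t => Gamma w m (fun y => u y t) x)
  + r ^ 4 * intQ rho m x0 r (fun x t => u_t u x t ^ 2)
  <= 100 / 9 * intQ rho m x0 (9 * r) (fun x t => u x t ^ 2).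
Proof.
  pose proof intQ_Gamma_le as HG. pose proof intQ_u_t_le as HL. rewrite intQ_sq_eq.
  pose proof (intrinsic_lsum w m rho x0 r w_ge0 rho_pm jump_le adj_finite ball_finite rho_intrinsic)
    as intrinsic_U.
  pose proof (RInt_cutoff_gam_le w m rho x0 r U ut w_sym w_ge0 m_pos rho_pm r_pos jump_le
                intrinsic_U ut_continuous ut_heat) as HA.
  pose proof (RInt_cutoff_lap_sq_le w m rho x0 r U ut w_sym w_ge0 m_pos rho_pm r_pos jump_le
                intrinsic_U ut_continuous ut_heat) as HB.
  set (A := RInt _ (- (3 * r) ^ 2) 0) in *.
  set (B := RInt _ (- r ^ 2) 0) in *.
  set (M := RInt _ (- (9 * r) ^ 2) 0) in *.
  assert (Hr2 : 0 < r ^ 2) by (apply pow_lt; exact r_pos).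
  assert (r ^ 2 * B <= 9 * A)
    by (apply (Rmult_le_compat_l (r ^ 2)) in HB; [field_simplify in HB |]; lra).
  assert (r ^ 2 * A <= 10 / 9 * M)
    by (apply (Rmult_le_compat_l (r ^ 2)) in HA; [field_simplify in HA |]; lra).
  set (IG := intQ rho m x0 r _) in HG |- *.
  set (IL := intQ rho m x0 r _) in HL |- *.
  assert (r ^ 2 * IG <= r ^ 2 * A) by (apply Rmult_le_compat_l; lra).
  assert (r ^ 4 * IL <= r ^ 2 * (r ^ 2 * B)).
  { replace (r ^ 2 * (r ^ 2 * B)) with (r ^ 4 * B) by ring. apply Rmult_le_compat_l; [nra | lra]. }
  assert (r ^ 2 * (r ^ 2 * B) <= r ^ 2 * (9 * A)) by (apply Rmult_le_compat_l; lra).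
  lra.
Qed.

End AncientSolution.

Lemma jumps_lub_ge0 {V : Type} (w : V -> V -> R) (rho : V -> V -> R) s :
  pseudometric rho -> is_lub (jumps w rho) s -> 0 <= s.
Proof.
  intros (_ & rho_ge0 & _) [Hub Hleast].
  destruct (Classical_Prop.classic (exists z, jumps w rho z)) as [[z Hz] | Hempty].
  - destruct Hz as (x & y & Hxy & ->). apply Rle_trans with (rho x y); [apply rho_ge0 | apply Hub].
    exists x, y; auto.
  - enough (s <= s - 1) by lra. apply Hleast. intros z Hz. exfalso. eauto.
Qed.

Lemma intQ_radius0 {V : Type} (rho : V -> V -> R) m x0 (F : V -> R -> R) : intQ rho m x0 0 F = 0.
Proof. unfold intQ. replace (- 0 ^ 2) with 0 by ring. exact (RInt_point 0 _). Qed.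

Theorem theorem3p1 :
  exists C : R,
  forall (V : Type) (w : V -> V -> R) (m : V -> R) (rho : V -> V -> R)
         (s : R) (x0 : V) (u : V -> R -> R) (r : R),
    weighted_graph w m ->
    intrinsic_metric w m rho ->
    (forall (x : V) (a : R), finite_set (rball rho x a)) ->
    is_lub (jumps w rho) s ->
    ancient_solution w m u ->
    s <= r ->
    r ^ 2 * intQ rho m x0 r (fun x t => Gamma w m (fun y => u y t) x)
    + r ^ 4 * intQ rho m x0 r (fun x t => (u_t u x t) ^ 2)
    <= C * intQ rho m x0 (9 * r) (fun x t => (u x t) ^ 2).
Proof.
  exists (100 / 9). intros V w m rho s x0 u r Hgraph Hintr Hballs Hlub Hanc Hsr.
  destruct Hgraph as (w_sym & w_ge0 & _ & adj_fin & m_pos & _).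
  assert (jump_le : forall x y, adj w x y -> rho x y <= r).
  { intros x y Hxy. apply Rle_trans with s; [apply Hlub; now exists x, y | exact Hsr]. }
  pose proof (jumps_lub_ge0 w rho s (proj1 Hintr) Hlub).
  destruct (Rle_lt_or_eq_dec 0 r) as [r_pos | <-]; [lra | |].
  - eapply ancient_energy_estimate; eauto.
  - rewrite Rmult_0_r, !intQ_radius0. lra.
Qed.
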